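(* Let $R$ be a ring, $S_0(R)$ its largest left regular denominator set and $Q_l(R)=S_0(R)^{-1}R$, with group of units $Q_l(R)^*$. Then: (1) $S_0(Q_l(R))=Q_l(R)^*$ and $S_0(Q_l(R))\cap R=S_0(R)$. (2) $Q_l(R)^*$ is the group generated by $S_0(R)$ and $S_0(R)^{-1}:=\{s^{-1}\mid s\in S_0(R)\}$. (3) $Q_l(R)^*=\{s^{-1}t\mid s,t\in S_0(R)\}$. (4) $Q_l(Q_l(R))=Q_l(R)$.
   Context: Rings are associative with $1$. A multiplicatively closed subset $S\subseteq R$ ($1\in S$, $0\notin S$, closed under products) is a left Ore set if $Sr\cap Rs\neq\emptyset$ for all $r\in R,s\in S$; $\mathrm{ass}(S):=\{r\mid sr=0\text{ for some }s\in S\}$. A left Ore set is a left denominator set if $rs=0$ ($r\in R,s\in S$) implies $tr=0$ for some $t\in S$. $\mathrm{Den}_l(R,0)$ denotes the set of left denominator sets $S$ with $\mathrm{ass}(S)=0$; it has a largest element under inclusion, denoted $S_0(R)$ (the largest left regular denominator set), and $Q_l(R):=S_0(R)^{-1}R$ is the largest left quotient ring of $R$; $R$ is regarded as a subring of $Q_l(R)$. For any ring $A$, $S_0(A)$ and $Q_l(A)$ are defined in the same way, so $Q_l(R)\subseteq Q_l(Q_l(R))$ naturally. *)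

From HB Require Import structures.
From mathcomp Require Import all_boot all_algebra.
Set Implicit Arguments. Unset Strict Implicit. Unset Printing Implicit Defensive.
Import GRing.Theory.
Local Open Scope ring_scope.

Section OreDefs.
Variable R : nzRingType.

Definition mult_closed (S : R -> Prop) : Prop :=
  [/\ S 1, ~ S 0 & forall a b, S a -> S b -> S (a * b)].

Definition left_ore (S : R -> Prop) : Prop :=
  mult_closed S /\
  forall r s, S s -> exists s' r', S s' /\ s' * r = r' * s.

Definition ass (S : R -> Prop) (r : R) : Prop := exists s, S s /\ s * r = 0.

Definition left_den (S : R -> Prop) : Prop :=
  left_ore S /\
  forall r s, S s -> r * s = 0 -> exists t, S t /\ t * r = 0.

Definition Den_l0 (S : R -> Prop) : Prop :=
  left_den S /\ forall r, ass S r -> r = 0.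

Definition is_S0 (S : R -> Prop) : Prop :=
  Den_l0 S /\ forall T, Den_l0 T -> forall x, T x -> S x.

End OreDefs.

Definition is_unit (A : nzRingType) (x : A) : Prop :=
  exists y, x * y = 1 /\ y * x = 1.

(* phi : R -> Q is a left ring of fractions (left localization) of R at S,
   i.e. Q "=" S^{-1}R: phi(s) is a unit for s ∈ S, every element of Q is
   of the form phi(s)^{-1} phi(r) (s ∈ S), and ker phi = ass(S). *)
Definition is_left_loc (R Q : nzRingType) (S : R -> Prop)
  (phi : {rmorphism R -> Q}) : Prop :=
  [/\ forall s, S s -> is_unit (phi s),
      forall q, exists s r, S s /\ phi s * q = phi r
    & forall r, phi r = 0 <-> ass S r].

Inductive gen_group (R : nzRingType) (Q : unitRingType)
    (phi : R -> Q) (S : R -> Prop) : Q -> Prop :=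
  | gg_one : gen_group phi S 1
  | gg_gen : forall s, S s -> gen_group phi S (phi s)
  | gg_inv : forall s, S s -> gen_group phi S ((phi s)^-1)
  | gg_mul : forall x y, gen_group phi S x -> gen_group phi S y ->
               gen_group phi S (x * y).

From HB Require Import structures.
From mathcomp Require Import all_boot all_algebra.
From Stdlib Require Import ClassicalEpsilon.
Import GRing.Theory.
Local Open Scope ring_scope.

(* The units of any ring form a left regular denominator set, so Q^* lies
   in S_0(Q) by maximality.  Conversely, for T in Den_l(Q, 0) the set of
   r in R with T meeting Q phi(r) and with x r = 0 only for x = 0 is again
   in Den_l(R, 0), hence lies in S_0(R), which phi maps into Q^*.  Writing
   t in T as phi(s)^-1 phi(r) shows that r is in this set, so t is a unit.
   The rest follows from the fraction form q = phi(s)^-1 phi(r) of the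
   elements of Q and from the fact that a localization at units is an
   isomorphism. *)

Set Implicit Arguments.

Lemma den_l0_rreg (A : nzRingType) (T : A -> Prop) {t q} :
  Den_l0 T -> T t -> q * t = 0 -> q = 0.
Proof.
case=> [[_ Tden] Tass] Tt qt0; have [t' [Tt' t'q0]] := Tden q t Tt qt0.
by apply: Tass; exists t'.
Qed.

Lemma units_den_l0 (A : unitRingType) : Den_l0 (fun a : A => a \is a GRing.unit).
Proof.
split; [split; [split; [split|]|]|].
- exact: unitr1.
- by rewrite unitr0.
- by move=> a b ua ub; rewrite unitrMl.
- move=> r s us; exists 1, (r * s^-1); split; first exact: unitr1.
  by rewrite mul1r divrK.
- move=> r s us rs0; exists 1; split; first exact: unitr1.
  by rewrite mul1r -(mulrK us r) rs0 mul0r.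
- by move=> r [s [us sr0]]; rewrite -(mulKr us r) sr0 mulr0.
Qed.

Lemma left_loc_units_bijective (A : unitRingType) (B : nzRingType)
    (S : A -> Prop) (psi : {rmorphism A -> B}) :
  (forall a, ass S a -> a = 0) -> (forall s, S s -> s \is a GRing.unit) ->
  is_left_loc S psi -> bijective psi.
Proof.
move=> assS0 Sunit [_ psi_frac psi_ker].
have psi_inj : injective psi.
  move=> a b eq_ab; apply/eqP; rewrite -subr_eq0; apply/eqP.
  by apply/assS0/psi_ker; rewrite rmorphB eq_ab subrr.
have psi_surj b : exists a, psi a = b.
  have [s [r [Ss Esr]]] := psi_frac b.
  exists (s^-1 * r); rewrite rmorphM -Esr mulrA -rmorphM mulVr ?Sunit //.
  by rewrite rmorph1 mul1r.
pose psi_inv b := proj1_sig (constructive_indefinite_description _ (psi_surj b)).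
have psi_invK b : psi (psi_inv b) = b.
  by rewrite /psi_inv; case: constructive_indefinite_description.
by exists psi_inv => [a|b]; [apply: psi_inj|].
Qed.

Section LeftQuotientRing.
Variables (R : nzRingType) (S0 : R -> Prop) (Q : unitRingType)
  (phi : {rmorphism R -> Q}).
Hypotheses (HS0 : is_S0 S0) (HL : is_left_loc S0 phi).

Lemma loc_eq0 r : phi r = 0 -> r = 0.
Proof. by case: HL HS0 => _ _ Hker [[_ Hass] _] /Hker /Hass. Qed.

Lemma loc_inj : injective phi.
Proof.
move=> a b eq_ab; apply/eqP; rewrite -subr_eq0; apply/eqP; apply: loc_eq0.
by rewrite rmorphB eq_ab subrr.
Qed.

Lemma loc_unit s : S0 s -> phi s \is a GRing.unit.
Proof. by case: HL => Hu _ _ /Hu [y [sy ys]]; apply/unitrP; exists y. Qed.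

Lemma loc_frac q : exists s r, S0 s /\ q = (phi s)^-1 * phi r.
Proof.
case: HL => _ Hfrac _; have [s [r [Ss Esr]]] := Hfrac q.
by exists s, r; split; rewrite // -Esr mulKr ?loc_unit.
Qed.

Lemma loc_mul_unit_eq0 {r u} : u \is a GRing.unit -> phi r * u = 0 -> r = 0.
Proof. by move=> uu /eqP; rewrite mulIr_eq0; [move/eqP/loc_eq0 | exact: mulIr]. Qed.

Section Pullback.
Variable T : Q -> Prop.
Hypothesis HT : Den_l0 T.

Definition pullback (r : R) : Prop :=
  (exists q, T (q * phi r)) /\ forall x, x * r = 0 -> x = 0.

Let T_ore r s : T s -> exists s' r', T s' /\ s' * r = r' * s.
Proof. by case: HT => [[[_ Tore] _] _]; apply: Tore. Qed.

Lemma pullback_mult_closed : mult_closed pullback.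
Proof.
have [[[[T1 T0 TM] _] _] _] := HT.
split.
- split; first by exists 1; rewrite rmorph1 mulr1.
  by move=> x; rewrite mulr1.
- by case=> [[q]]; rewrite rmorph0 mulr0.
- move=> a b [[q Ta] rega] [[p Tb] regb]; split; last first.
    by move=> x; rewrite mulrA => /regb /rega.
  have [t [y [Tt Ety]]] := T_ore p Ta.
  exists (y * q); rewrite rmorphM !mulrA -(mulrA y) -Ety -mulrA.
  exact: TM.
Qed.

Lemma pullback_ore r s : pullback s -> exists s' r', pullback s' /\ s' * r = r' * s.
Proof.
move=> [[q Ts] _].
have [t [y [Tt Ety]]] := T_ore (phi r) Ts.
have [c [d [Sc Ecd]]] := loc_frac (y * q).
have [g [h [Sg Egh]]] := loc_frac (phi c * t).
have ugc : phi g * phi c \is a GRing.unit by rewrite unitrMl ?loc_unit.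
(* Clearing the denominators of y q and of phi c t brings the Ore relation back to R. *)
have Egct : phi h = phi g * phi c * t by rewrite -mulrA Egh mulVKr ?loc_unit.
exists h, (g * d); split; last first.
  have Ecd' : phi c * (y * q) = phi d by rewrite Ecd mulVKr ?loc_unit.
  by apply: loc_inj; rewrite !rmorphM Egct -mulrA Ety -Ecd' !mulrA.
split; first by exists (phi g * phi c)^-1; rewrite Egct mulKr.
move=> x xh0; apply: (loc_mul_unit_eq0 ugc).
apply: (den_l0_rreg HT Tt).
by rewrite -mulrA -Egct -rmorphM xh0 rmorph0.
Qed.

Lemma pullback_den_l0 : Den_l0 pullback.
Proof.
split; [split; [split|] |].
- exact: pullback_mult_closed.
- exact: pullback_ore.
- move=> r s [_ regs] rs0; exists 1; split; first by case: pullback_mult_closed.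
  by rewrite mul1r; apply: regs.
- move=> r [s [[[q Ts] _] sr0]]; apply: loc_eq0; case: HT => _; apply.
  by exists (q * phi s); rewrite -mulrA -rmorphM sr0 rmorph0 mulr0.
Qed.

Lemma pullback_sub_S0 r : pullback r -> S0 r.
Proof. by case: HS0 => _ Hmax; apply: Hmax; exact: pullback_den_l0. Qed.

End Pullback.

Lemma loc_unitE r : phi r \is a GRing.unit <-> S0 r.
Proof.
split; last exact: loc_unit.
move=> ur; apply: (pullback_sub_S0 (units_den_l0 Q)); split.
  by exists 1; rewrite mul1r.
by move=> x xr0; apply: (loc_mul_unit_eq0 ur); rewrite -rmorphM xr0 rmorph0.
Qed.

Lemma units_is_S0 : is_S0 (fun q : Q => q \is a GRing.unit).
Proof.
split; first exact: units_den_l0.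
move=> T HT x Tx; have [s [r [Ss Ex]]] := loc_frac x.
have Sr : S0 r.
  apply: (pullback_sub_S0 HT); split; first by exists (phi s)^-1; rewrite -Ex.
  move=> y yr0; apply: (loc_mul_unit_eq0 (loc_unit Ss)).
  apply: (den_l0_rreg HT Tx).
  by rewrite Ex -mulrA mulVKr ?loc_unit // -rmorphM yr0 rmorph0.
by rewrite Ex unitrMl ?unitrV ?loc_unit.
Qed.

Lemma unit_fracE q : q \is a GRing.unit <->
  exists s t, [/\ S0 s, S0 t & q = (phi s)^-1 * phi t].
Proof.
split=> [uq | [s [t [Ss St ->]]]]; last by rewrite unitrMl ?unitrV ?loc_unit.
have [s [r [Ss Eq]]] := loc_frac q; exists s, r; split=> //.
apply/loc_unitE; move: uq; rewrite Eq unitrMr // unitrV; exact: loc_unit.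
Qed.

Lemma unit_gen_groupE q : q \is a GRing.unit <-> gen_group phi S0 q.
Proof.
split=> [/unit_fracE [s [t [Ss St ->]]] | ]; first by do !constructor.
elim=> [| s Ss | s Ss | x y _ ux _ uy].
- exact: unitr1.
- exact: loc_unit.
- by rewrite unitrV loc_unit.
- by rewrite unitrMl.
Qed.

End LeftQuotientRing.

Theorem theorem2p8 (R : nzRingType) (S0 : R -> Prop) (Q : unitRingType)
    (phi : {rmorphism R -> Q}) :
  is_S0 S0 -> is_left_loc S0 phi ->
  (* (1) S_0(Q_l(R)) = Q_l(R)^*  and  S_0(Q_l(R)) ∩ R = S_0(R) *)
  (is_S0 (fun q : Q => q \is a GRing.unit) /\
   forall r : R, phi r \is a GRing.unit <-> S0 r) /\
  (* (2) Q_l(R)^* is generated by S_0(R) and S_0(R)^{-1} *)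
  (forall q : Q, q \is a GRing.unit <-> gen_group phi S0 q) /\
  (* (3) Q_l(R)^* = { s^{-1} t | s, t ∈ S_0(R) } *)
  (forall q : Q, q \is a GRing.unit <->
     exists s t, [/\ S0 s, S0 t & q = (phi s)^-1 * phi t]) /\
  (* (4) Q_l(Q_l(R)) = Q_l(R) *)
  (forall (S0Q : Q -> Prop) (Q' : nzRingType) (psi : {rmorphism Q -> Q'}),
     is_S0 S0Q -> is_left_loc S0Q psi -> bijective psi).
Proof.
move=> HS0 HL.
split; [split | split; [| split]] => [| r | q | q |].
- exact: (units_is_S0 HS0 HL).
- exact: (loc_unitE HS0 HL).
- exact: (unit_gen_groupE HS0 HL).
- exact: (unit_fracE HS0 HL).
move=> S0Q Q' psi [S0QD _] HLQ.
apply: (left_loc_units_bijective S0QD.2 _ HLQ).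
by case: (units_is_S0 HS0 HL) => _; apply.
Qed.
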